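(* Let $n\ge 6$ and $k$ be coprime integers with $3\le k\le n-3$. Then $\mathsf{BO}(k,\mathbb{Z}/n\mathbb{Z})\ge k+1$; that is, there is a subset of $\mathbb{Z}/n\mathbb{Z}$ of cardinality $k$ which is not $k$-barycentric.
   Context: For a positive integer $k$, a set $\{g_1,\dots,g_k\}$ of $k$ distinct elements of a finite abelian group $G$ (written additively) is called $k$-barycentric if $\sum_{i=1}^k g_i = k\,g_j$ for some $1\le j\le k$. The $k$-th barycentric Olson constant $\mathsf{BO}(k,G)$ is the smallest integer $\ell$ such that every subset $A\subseteq G$ with $|A|\ge \ell$ contains a $k$-barycentric subset (so that always $\mathsf{BO}(k,G)\le |G|+1$). *)

From HB Require Import structures.
From mathcomp Require Import all_boot all_order all_algebra.
Set Implicit Arguments. Unset Strict Implicit. Unset Printing Implicit Defensive.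
Import GRing.Theory.
Local Open Scope ring_scope.

Definition barycentric (G : finZmodType) (k : nat) (B : {set G}) : bool :=
  (#|B| == k)%N && [exists j in B, \sum_(g in B) g == j *+ k].

Definition has_barycentric (G : finZmodType) (k : nat) (A : {set G}) : bool :=
  [exists B : {set G}, (B \subset A) && barycentric k B].

Definition BO_prop (G : finZmodType) (k : nat) (l : nat) : bool :=
  [forall A : {set G}, (l <= #|A|)%N ==> has_barycentric k A].

Lemma BO_prop_top (G : finZmodType) (k : nat) : BO_prop G k #|G|.+1.
Proof.
apply/forallP => A; apply/implyP => H.
have := max_card A; rewrite leqNgt => /negP; by [].
Qed.

Lemma BO_exists (G : finZmodType) (k : nat) : exists l, BO_prop G k l.
Proof. by exists #|G|.+1; apply: BO_prop_top. Qed.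

Definition BO (k : nat) (G : finZmodType) : nat := ex_minn (BO_exists G k).

From HB Require Import structures.
From mathcomp Require Import all_boot all_order all_algebra zify.

(* Take A = {a_1, ..., a_k} with the a_i distinct NONZERO residues whose sum
   is 0 in Z/nZ.  If A were barycentric, then k * a_j = sum A = 0 for some
   a_j in A, and since k is invertible modulo n this forces a_j = 0, which is
   impossible.  So A is a k-set without a k-barycentric subset (its only
   k-subset is itself), whence BO(k, Z/nZ) > k. *)

Set Implicit Arguments.
Unset Strict Implicit.
Unset Printing Implicit Defensive.

Import GRing.Theory.

(* Induction on k: the largest element
   k+1+e absorbs as much of the excess t as possible (e <= m - (k+1)), and
   the remaining k elements are chosen in [1, k + e]. *)
Lemma distinct_sum_in_range (k m t : nat) : (k <= m)%N -> (t <= k * (m - k))%N ->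
  exists l : seq nat, [/\ uniq l, size l = k, all (fun x => 0 < x <= m)%N l &
     (sumn l = sumn (iota 1 k) + t)%N].
Proof.
elim: k m t => [|k IH] m t Hkm Ht; first by exists [::]; split => //=; lia.
pose e := minn (m - k.+1) t.
have He : (t - e <= k * (k + e - k))%N by rewrite /e; nia.
have [l [Hu Hs Ha Hsum]] := IH (k + e) (t - e) (leq_addr _ _) He.
have small_l x : x \in l -> (0 < x <= k + e)%N by move=> /(allP Ha).
exists (k.+1 + e :: l); split.
- rewrite /= Hu andbT; apply/negP => /small_l; lia.
- by rewrite /= Hs.
- apply/andP; split; first by rewrite /e; lia.
  by apply/allP => x /small_l; rewrite /e; lia.
- have iotaS : sumn (iota 1 k.+1) = sumn (iota 1 k) + k.+1.
    by rewrite -(addn1 k) iotaD sumn_cat /=; lia.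
  by rewrite [sumn _]/= Hsum iotaS /e; lia.
Qed.

Local Open Scope ring_scope.

(* For 2 <= k <= n - 3 there are k distinct nonzero residues modulo n whose
   sum is 0: add to 1 + ... + k the excess t < n needed to reach a multiple of
   n; this fits since t <= n - 1 <= k (n - 1 - k). *)
Lemma zero_sum_nonzero_set (n k : nat) : (2 <= k)%N -> (k <= n - 3)%N ->
  exists A : {set 'Z_n}, [/\ #|A| = k, 0 \notin A & \sum_(g in A) g = 0].
Proof.
move=> hk2 hkn; have n_gt1 : (1 < n)%N by lia.
pose t := ((n - sumn (iota 1 k) %% n) %% n)%N.
have t_lt_n : (t < n)%N by rewrite ltn_mod; lia.
have [l [Hu Hs Ha Hsum]] := distinct_sum_in_range (k := k) (m := n.-1) (t := t)
  ltac:(lia) ltac:(nia).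
have l_range x : x \in l -> (0 < x < n)%N by move=> /(allP Ha); lia.
have dvd_sum : (n %| sumn l)%N.
  rewrite Hsum /dvdn /t modnDmr -modnDml subnKC ?modnn //.
  by apply: ltnW; rewrite ltn_mod; lia.
pose s := [seq (x%:R : 'Z_n) | x <- l].
have cast_inj : {in l &, injective (fun x => (x%:R : 'Z_n))}.
  move=> x y /l_range Hx /l_range Hy /(congr1 val).
  by rewrite /= !val_Zp_nat // !modn_small //; lia.
have s_uniq : uniq s by rewrite map_inj_in_uniq.
exists [set x in s]; split.
- by rewrite cardsE (card_uniqP s_uniq) size_map.
- rewrite inE; apply/mapP => -[x /l_range Hx /(congr1 val)].
  by rewrite /= val_Zp_nat // modn_small //; lia.
- rewrite (eq_bigl (mem s)); last by move=> g; rewrite inE.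
  rewrite -big_uniq // big_map.
  by rewrite -natr_sum -sumnE -Zp_nat_mod // (eqP dvd_sum).
Qed.

(* Multiplication by an integer coprime to n has trivial kernel on Z/nZ:
   n divides x k, hence n divides x < n, so x = 0. *)
Lemma Zp_mulrn_eq0 (n k : nat) (x : 'Z_n) : (1 < n)%N -> coprime n k ->
  x *+ k = 0 -> x = 0.
Proof.
move=> n_gt1 cop_nk xk0.
have x_lt_n : (val x < n)%N by rewrite -[n in (_ < n)%N](Zp_cast n_gt1) ltn_ord.
have n_dvd_x : (n %| val x)%N.
  rewrite -(Gauss_dvdl _ cop_nk) /dvdn.
  by move/(congr1 val): xk0; rewrite -[x in x *+ _]natr_Zp -mulrnA /= val_Zp_nat // => ->.
apply: val_inj => /=.
by case: (posnP (val x)) => // /dvdn_leq /(_ n_dvd_x); lia.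
Qed.

(* A set of nonzero residues with zero sum cannot be k-barycentric when k is
   coprime to n: the barycenter j would satisfy k j = 0, i.e. j = 0. *)
Lemma zero_sum_not_barycentric (n k : nat) (A : {set 'Z_n}) :
  (1 < n)%N -> coprime n k -> 0 \notin A -> \sum_(g in A) g = 0 ->
  ~~ barycentric k A.
Proof.
move=> n_gt1 cop_nk A_nz A_sum0; rewrite /barycentric negb_and orbC.
apply/orP; left; apply/existsP => -[j /andP[jA]].
rewrite A_sum0 eq_sym => /eqP /(Zp_mulrn_eq0 n_gt1 cop_nk) j0.
by move: A_nz; rewrite -j0 jA.
Qed.

(* In any finite abelian group, a k-set which is not k-barycentric witnesses
   BO(k, G) > k: it is its own only k-subset. *)
Lemma BO_gt_of_not_barycentric (G : finZmodType) (k : nat) (A : {set G}) :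
  #|A| = k -> ~~ barycentric k A -> (k < BO k G)%N.
Proof.
move=> cardA Anb; rewrite /BO; case: ex_minnP => m Hm _.
rewrite ltnNge; apply/negP => m_le_k.
move/forallP/(_ A)/implyP: Hm; rewrite cardA => /(_ m_le_k).
case/existsP => B /andP[BA Bb].
have BeqA : B = A.
  apply/eqP; rewrite eqEcard BA cardA.
  by case/andP: Bb => /eqP -> _; rewrite leqnn.
by move: Anb; rewrite -BeqA Bb.
Qed.

Theorem mainTheorem4 (n k : nat) (hn : (6 <= n)%N) (hcop : coprime n k)
    (hk3 : (3 <= k)%N) (hkn : (k <= n - 3)%N) :
  (k.+1 <= BO k 'Z_n)%N.
Proof.
have n_gt1 : (1 < n)%N by lia.
have [A [cardA A_nz A_sum0]] := zero_sum_nonzero_set (ltnW hk3) hkn.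
apply: (BO_gt_of_not_barycentric cardA).
exact: (zero_sum_not_barycentric n_gt1 hcop A_nz A_sum0).
Qed.
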